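(* Let $X$ be a finite set, let $F_X,F'_X$ be filtrations over $X$ and let $C_X=\Phi(F_X)$, $C'_X=\Phi(F'_X)$ be their facegrams. Then $d_{\mathrm{I}}(C_X,C'_X)=d_{\mathrm{I}}(F_X,F'_X)$.
   Context: $\mathbf{pow}(X)$ is the set of nonempty subsets of $X$; a filtration is an order-preserving map $F_X:(\mathbf{pow}(X),\subset)\to(\mathbb{R},\leq)$. A face-set of $X$ is a family of pairwise inclusion-incomparable nonempty subsets of $X$, ordered by $\mathcal{S}\leq\mathcal{S}'$ iff each face of $\mathcal{S}$ is contained in a face of $\mathcal{S}'$. The facegram of $F_X$ is $\Phi(F_X)(t):=$ the set of inclusion-maximal elements of $\{\sigma\in\mathbf{pow}(X)\mid F_X(\sigma)\leq t\}$. Interleaving distances: $d_{\mathrm{I}}(C_X,C'_X):=\inf\{\varepsilon\geq0\mid C_X(t)\leq C'_X(t+\varepsilon)\text{ and }C'_X(t)\leq C_X(t+\varepsilon)\ \forall t\in\mathbb{R}\}$ and $d_{\mathrm{I}}(F_X,F'_X):=\max_{\sigma\in\mathbf{pow}(X)}|F_X(\sigma)-F'_X(\sigma)|$. *)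

From HB Require Import structures.
From mathcomp Require Import all_boot all_order all_algebra.
From mathcomp Require Import boolp classical_sets reals.
Set Implicit Arguments. Unset Strict Implicit. Unset Printing Implicit Defensive.
Import Order.TTheory GRing.Theory Num.Theory.
Local Open Scope ring_scope.

(* pow(X) = nonempty subsets of X; a filtration is a function on {set X}
   that is order preserving on nonempty subsets (its value on set0 is
   irrelevant, set0 is not in pow(X)). *)
Definition is_filtration (R : realType) (X : finType) (F : {set X} -> R) : Prop :=
  forall s t : {set X}, s != finset.set0 -> t != finset.set0 -> s \subset t -> F s <= F t.

Definition faceset_le (X : finType) (S S' : {set {set X}}) : bool :=
  [forall s in S, exists t in S', s \subset t].

Definition facegram (R : realType) (X : finType) (F : {set X} -> R) (t : R)
  : {set {set X}} :=
  [set s : {set X} | [&& s != finset.set0, F s <= t &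
     [forall u : {set X}, ((u != finset.set0) && (F u <= t)) ==> ~~ (s \proper u)]]].

Definition dI_facegram (R : realType) (X : finType)
  (C C' : R -> {set {set X}}) : R :=
  inf [set e : R | 0 <= e /\
        (forall t : R, faceset_le (C t) (C' (t + e)) /\
                       faceset_le (C' t) (C (t + e)))]%classic.

(* interleaving distance of filtrations: max over nonempty sigma
   (0 if X is empty, the empty maximum of nonnegative numbers). *)
Definition dI_filtration (R : realType) (X : finType) (F F' : {set X} -> R) : R :=
  \big[Num.max/0]_(s : {set X} | s != finset.set0) `|F s - F' s|.

From HB Require Import structures.
From mathcomp Require Import all_boot all_order all_algebra.
From mathcomp Require Import boolp classical_sets reals.
Set Implicit Arguments. Unset Strict Implicit. Unset Printing Implicit Defensive.
Import Order.TTheory GRing.Theory Num.Theory.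
Local Open Scope ring_scope.

(* For e >= 0, the facegrams of F and F' are e-interleaved iff
   |F s - F' s| <= e for every nonempty face s.  Indeed, one half of the
   interleaving, C(t) <= C'(t + e) for all t, is equivalent to the one-sided
   bound F' s <= F s + e: a facet m of C(t) has F m <= t, hence
   F' m <= t + e, and m extends to a facet of C'(t + e); conversely a face s
   lies in a facet of C(F s), which lies in a facet m' of C'(F s + e), and
   monotonicity of F' gives F' s <= F' m' <= F s + e.  The set of admissible
   interleaving constants is therefore the up-set [d_I(F, F'), +oo), whose
   infimum is d_I(F, F').
   The file first proves the two basic properties of facegrams (facets are
   sublevel faces; every sublevel face lies in a facet), then the one-sided
   equivalence, then the characterisation of the admissible constants. *)

Section Facegram.
Variables (R : realType) (X : finType).
Implicit Types (G : {set X} -> R) (t : R) (s m : {set X}).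

Lemma facegram_face G t m : m \in facegram G t -> m != finset.set0 /\ G m <= t.
Proof. by rewrite inE => /and3P[]. Qed.

(* Every nonempty face of value at most t lies in a facet of the facegram
   at t: a superset of maximal cardinality inside the sublevel set is one. *)
Lemma facegram_cover G t s :
  s != finset.set0 -> G s <= t -> exists2 m, m \in facegram G t & s \subset m.
Proof.
move=> sn0 Gs.
pose P u := [&& u != finset.set0, G u <= t & s \subset u].
have Ps : P s by rewrite /P sn0 Gs subxx.
have [m /and3P[mn0 Gm sm] mmax] := @arg_maxnP _ s P (fun u => #|u|) Ps.
exists m => //; rewrite inE mn0 Gm /=; apply/forallP => u; apply/implyP.
move=> /andP[un0 Gu]; apply/negP => pmu.
have Pu : P u by rewrite /P un0 Gu (fintype.subset_trans sm (proper_sub pmu)).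
by have := leq_trans (proper_card pmu) (mmax u Pu); rewrite ltnn.
Qed.

Lemma facegram_shift_le (F F' : {set X} -> R) (e : R) :
  is_filtration F' ->
  (forall t, faceset_le (facegram F t) (facegram F' (t + e))) <->
  (forall s, s != finset.set0 -> F' s <= F s + e).
Proof.
move=> hF'; split=> [shift s sn0 | bound t].
- have [m mC sm] := facegram_cover sn0 (lexx (F s)).
  have /forall_inP/(_ m mC)/exists_inP[m' m'C mm'] := shift (F s).
  have [m'n0 F'm'] := facegram_face m'C.
  by apply: le_trans F'm'; apply: hF' => //; apply: fintype.subset_trans sm mm'.
- apply/forall_inP => m mC; have [mn0 Fm] := facegram_face mC.
  have F'm : F' m <= t + e by apply: le_trans (bound m mn0) _; rewrite lerD2r.
  by have [m' m'C mm'] := facegram_cover mn0 F'm; apply/exists_inP; exists m'.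
Qed.

End Facegram.

Lemma ler_dist_shift (R : realDomainType) (a b e : R) :
  (`|a - b| <= e) = (b <= a + e) && (a <= b + e).
Proof. by rewrite ler_distl lerBlDr addrC. Qed.

Lemma inf_upset (R : realType) (d : R) : inf [set e | d <= e]%classic = d.
Proof.
have lb : lbound [set e | d <= e]%classic d by [].
apply/le_anti/andP; split.
- by apply: ge_inf => //=; exists d.
- by apply: lb_le_inf => //; exists d => /=.
Qed.

Section FiltrationDistance.
Variables (R : realType) (X : finType) (F F' : {set X} -> R).

Lemma dI_filtration_ge0 : 0 <= dI_filtration F F'.
Proof.
by rewrite /dI_filtration; elim/big_ind: _ => // x y; rewrite le_max => ->.
Qed.

Lemma dI_filtration_le (e : R) : 0 <= e ->
  dI_filtration F F' <= e <->
  (forall s : {set X}, s != finset.set0 -> `|F s - F' s| <= e).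
Proof.
move=> e0; split=> [de s sn0 | bound]; last exact: bigmax_le.
by apply: le_trans de; rewrite /dI_filtration (bigD1 s) //= le_max lexx.
Qed.

Hypotheses (hF : is_filtration F) (hF' : is_filtration F').

Lemma facegram_interleaving_iff (e : R) :
  (0 <= e /\ forall t, faceset_le (facegram F t) (facegram F' (t + e)) /\
                       faceset_le (facegram F' t) (facegram F (t + e)))
  <-> dI_filtration F F' <= e.
Proof.
split=> [[e0 shift] | de].
- apply/dI_filtration_le => // s sn0; rewrite ler_dist_shift.
  have /(facegram_shift_le _ _ hF') bound' := fun t => (shift t).1.
  have /(facegram_shift_le _ _ hF) bound := fun t => (shift t).2.
  by rewrite bound' ?bound.
- have e0 := le_trans dI_filtration_ge0 de; split=> // t.
  have bound := (dI_filtration_le e0).1 de.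
  have /(facegram_shift_le _ _ hF') shift' :
      forall s, s != finset.set0 -> F' s <= F s + e.
    by move=> s /bound; rewrite ler_dist_shift => /andP[].
  have /(facegram_shift_le _ _ hF) shift :
      forall s, s != finset.set0 -> F s <= F' s + e.
    by move=> s /bound; rewrite ler_dist_shift => /andP[].
  by split.
Qed.

End FiltrationDistance.

Theorem mainTheorem8 (R : realType) (X : finType) (F F' : {set X} -> R)
  (hF : is_filtration F) (hF' : is_filtration F') :
  dI_facegram (facegram F) (facegram F') = dI_filtration F F'.
Proof.
rewrite /dI_facegram -[RHS]inf_upset; congr inf.
by apply/seteqP; split=> e /facegram_interleaving_iff; apply.
Qed.
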